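(* Let $A\in\mathbb{R}^{n\times n}$ be symmetric positive definite, $B\in\mathbb{R}^{m\times n}$ and $C\in\mathbb{R}^{l\times m}$, and suppose that the matrix $\mathcal{A}$ defined below is singular. Then for every $\alpha>0$ the matrix $\mathcal{T}_\alpha$ defined below satisfies $\operatorname{index}(\mathcal{I}-\mathcal{T}_\alpha)=1$.
   Context: Let $\mathbf{n}=n+m+l$ and $\mathcal{I}$ be the $\mathbf{n}\times\mathbf{n}$ identity. Define $$\mathcal{A}=\begin{pmatrix}A&B^T&0\\-B&0&-C^T\\0&C&0\end{pmatrix},\quad \mathcal{A}_1=\begin{pmatrix}A&B^T&0\\-B&0&0\\0&0&0\end{pmatrix},\quad \mathcal{A}_2=\begin{pmatrix}0&0&0\\0&0&-C^T\\0&C&0\end{pmatrix},$$ so $\mathcal{A}=\mathcal{A}_1+\mathcal{A}_2$. For $\alpha>0$ the APSS iteration matrix is $$\mathcal{T}_\alpha=(\alpha\mathcal{I}+\mathcal{A}_2)^{-1}(\alpha\mathcal{I}-\mathcal{A}_1)(\alpha\mathcal{I}+\mathcal{A}_1)^{-1}(\alpha\mathcal{I}-\mathcal{A}_2).$$ The index of a square matrix $M$ is the smallest nonnegative integer $k$ such that $\operatorname{rank}(M^{k+1})=\operatorname{rank}(M^k)$. *)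

From HB Require Import structures.
From mathcomp Require Import all_boot all_order all_algebra.
Set Implicit Arguments. Unset Strict Implicit. Unset Printing Implicit Defensive.
Import Order.TTheory GRing.Theory Num.Theory.
Local Open Scope ring_scope.

(* Index of a square matrix: the smallest k with rank(M^(k+1)) = rank(M^k).
   Such a k always exists and is <= p, so searching 0..p is exact. *)
Definition mxindex (F : fieldType) (p : nat) (M : 'M[F]_p) : nat :=
  find (fun k => \rank (M ^+ k.+1) == \rank (M ^+ k)) (iota 0 p.+1).

Definition spd (R : realFieldType) (n : nat) (A : 'M[R]_n) : Prop :=
  A^T = A /\ forall x : 'cV[R]_n, x != 0 -> 0 < (x^T *m A *m x) 0 0.

Definition bigA (R : realFieldType) n m l (A : 'M[R]_n) (B : 'M[R]_(m, n))
  (C : 'M[R]_(l, m)) : 'M[R]_(n + m + l) :=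
  block_mx (block_mx A B^T (- B) 0) (col_mx 0 (- C^T)) (row_mx 0 C) 0.

Definition bigA1 (R : realFieldType) n m l (A : 'M[R]_n) (B : 'M[R]_(m, n))
  : 'M[R]_(n + m + l) :=
  block_mx (block_mx A B^T (- B) 0) 0 0 0.

Definition bigA2 (R : realFieldType) n m l (C : 'M[R]_(l, m))
  : 'M[R]_(n + m + l) :=
  block_mx 0 (col_mx (0 : 'M[R]_(n, l)) (- C^T)) (row_mx (0 : 'M[R]_(l, n)) C) 0.

Definition APSS (R : realFieldType) n m l (A : 'M[R]_n) (B : 'M[R]_(m, n))
  (C : 'M[R]_(l, m)) (alpha : R) : 'M[R]_(n + m + l) :=
  let I := (1%:M : 'M[R]_(n + m + l)) in
  let A1 := bigA1 l A B in
  let A2 := bigA2 n C in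
  invmx (alpha *: I + A2) *m (alpha *: I - A1) *m invmx (alpha *: I + A1)
    *m (alpha *: I - A2).

From mathcomp Require Import all_boot all_order all_algebra.
From mathcomp Require Import ring lra.
Import Order.TTheory GRing.Theory Num.Theory.
Local Open Scope ring_scope.
Set Implicit Arguments. Unset Strict Implicit.

(* Put W := (a + A1)(a + A2). Then W (I - T_a) = 2a (A1 + A2), so I - T_a has
   the rank of the singular matrix A1 + A2, and index 1 amounts to the row
   space of I - T_a meeting its left kernel trivially. Since A1 is a positive
   semidefinite S = diag(A, 0, 0) plus a skew matrix and A2 is skew, a row w
   with w (A1 + A2) = 0 satisfies w S w^T = 0, hence w S = 0 and
   w (A1 + A2)^T = 0. If u = v (I - T_a) lies in the left kernel, write
   u = w W with w (A1 + A2) = 0: on the one hand u w^T = 2a v W^-1 (A1 + A2) w^T = 0,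
   on the other u w^T = a^2 |w|^2 + |w A1|^2, so w = 0. *)

Lemma mxindex_eq1 (F : fieldType) p (M : 'M[F]_p) :
  (\rank M < p)%N -> \rank (M *m M) = \rank M -> mxindex M = 1%N.
Proof.
case: p M => [|p] M // rkM rkM2.
rewrite /mxindex /= expr1 expr2 -mulmxE rkM2 eqxx expr0 -idmxE mxrank1.
by rewrite ltn_eqF.
Qed.

Lemma mxrank_sqr (F : fieldType) p (K : 'M[F]_p) :
  (forall v : 'rV_p, v *m K *m K = 0 -> v *m K = 0) -> \rank (K *m K) = \rank K.
Proof.
move=> imK_kerK; have := mxrank_mul_ker K K.
suff ->: (K :&: kermx K)%MS = 0 by rewrite mxrank0 addn0.
apply/row_matrixP => i; rewrite row0.
have := row_sub i (K :&: kermx K)%MS.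
rewrite sub_capmx => /andP [/submxP [v ->] /sub_kermxP vKK].
exact: imK_kerK.
Qed.

Lemma det0_mxrank_lt (F : fieldType) p (M : 'M[F]_p) :
  \det M = 0 -> (\rank M < p)%N.
Proof.
move=> detM; rewrite ltn_neqAle rank_leq_row andbT.
by rewrite -[_ == _]/(row_free M) row_free_unit unitmxE detM unitr0.
Qed.

Lemma scalar_mx_comm (R : comPzRingType) p (a : R) (X : 'M[R]_p) :
  (a%:M + X) *m (a%:M - X) = (a%:M - X) *m (a%:M + X).
Proof.
rewrite !mulmxDl !mulmxDr ?mulNmx ?mulmxN !mul_scalar_mx ?mul_mx_scalar.
by rewrite !addrA subrK addrK.
Qed.

Lemma scalar_mx_prod_diff (R : comPzRingType) p (a : R) (X Y : 'M[R]_p) :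
  (a%:M + X) *m (a%:M + Y) - (a%:M - X) *m (a%:M - Y) = (a + a) *: (X + Y).
Proof.
rewrite !mulmxDl !mulmxDr ?mulNmx ?mulmxN !mul_scalar_mx ?mul_mx_scalar.
by apply/matrixP => i j; rewrite !mxE; ring.
Qed.

Definition pss_iter (F : fieldType) p (a : F) (A1 A2 : 'M[F]_p) : 'M[F]_p :=
  invmx (a%:M + A2) *m (a%:M - A1) *m invmx (a%:M + A1) *m (a%:M - A2).

Lemma pss_residual (F : fieldType) p (a : F) (A1 A2 : 'M[F]_p) :
  a%:M + A1 \in unitmx -> a%:M + A2 \in unitmx ->
  (a%:M + A1) *m (a%:M + A2) *m (1%:M - pss_iter a A1 A2) = (a + a) *: (A1 + A2).
Proof.
move=> U1 U2; rewrite /pss_iter mulmxBr mulmx1 !mulmxA (mulmxK U2).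
by rewrite scalar_mx_comm (mulmxK U1) scalar_mx_prod_diff.
Qed.

Section QuadraticForms.
Variable R : realFieldType.

Definition qform p (X : 'M[R]_p) (u : 'rV[R]_p) : R := (u *m X *m u^T) 0 0.

Lemma qform_tr p (X : 'M[R]_p) u : qform X^T u = qform X u.
Proof.
by rewrite /qform -{1}(trmxK u) -trmx_mul -mulmxA -trmx_mul mxE mulmxA.
Qed.

Lemma qformD p (X Y : 'M[R]_p) u : qform (X + Y) u = qform X u + qform Y u.
Proof. by rewrite /qform mulmxDr mulmxDl mxE. Qed.

Lemma qformN p (X : 'M[R]_p) u : qform (- X) u = - qform X u.
Proof. by rewrite /qform mulmxN mulNmx mxE. Qed.

Lemma qform_skew p (X : 'M[R]_p) u : X^T = - X -> qform X u = 0.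
Proof. by move=> skewX; have := qform_tr X u; rewrite skewX qformN; lra. Qed.

Lemma dotmx_self p (u : 'rV[R]_p) : (u *m u^T) 0 0 = \sum_j u 0 j ^+ 2.
Proof. by rewrite !mxE; apply: eq_bigr => j _; rewrite mxE expr2. Qed.

Lemma dotmx_self_ge0 p (u : 'rV[R]_p) : 0 <= (u *m u^T) 0 0.
Proof. by rewrite dotmx_self; apply: sumr_ge0 => j _; exact: sqr_ge0. Qed.

Lemma dotmx_self_eq0 p (u : 'rV[R]_p) : (u *m u^T) 0 0 = 0 -> u = 0.
Proof.
rewrite dotmx_self => /psumr_eq0P u0; apply/matrixP => i j.
rewrite (ord1 i) mxE; apply/eqP; rewrite -sqrf_eq0; apply/eqP.
by apply: u0 => // k _; exact: sqr_ge0.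
Qed.

Lemma psd_shift_unitmx p (a : R) (X : 'M[R]_p) :
  0 < a -> (forall u, 0 <= qform X u) -> a%:M + X \in unitmx.
Proof.
move=> a_gt0 psdX; rewrite -row_free_unit; apply: inj_row_free => u uX0.
have : qform (a%:M + X) u = 0 by rewrite /qform uX0 mul0mx mxE.
rewrite qformD /qform mul_mx_scalar -scalemxAl mxE -/(qform X u) => q0.
apply: dotmx_self_eq0; have := dotmx_self_ge0 u; have := psdX u.
by move: q0; set d := (u *m u^T) 0 0; nra.
Qed.

End QuadraticForms.

Section PSSIndex.
Variables (R : realFieldType) (p : nat) (S A1 A2 : 'M[R]_p).
Hypothesis A1_tr : A1^T = S *+ 2 - A1.
Hypothesis A2_skew : A2^T = - A2.
Hypothesis S_psd : forall u, 0 <= qform S u.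
Hypothesis S_qform_eq0 : forall u : 'rV_p, qform S u = 0 -> u *m S = 0.

Lemma qform_A1 u : qform A1 u = qform S u.
Proof. by have := qform_tr A1 u; rewrite A1_tr qformD qformN mulr2n qformD; lra. Qed.

Lemma lker_trmx (w : 'rV_p) : w *m (A1 + A2) = 0 -> w *m (A1 + A2)^T = 0.
Proof.
move=> wA0; have wS0 : w *m S = 0.
  apply: S_qform_eq0; rewrite -qform_A1 -[qform A1 w]addr0.
  by rewrite -{1}(qform_skew w A2_skew) -qformD /qform wA0 mul0mx mxE.
rewrite linearD /= A1_tr A2_skew -addrA -opprD mulmxBr wA0 subr0.
by rewrite mulr2n mulmxDr wS0 addr0.
Qed.

(* On the left kernel of A1 + A2, w A2 = - w A1 turns w A1 A2 w^T into |w A1|^2. *)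
Lemma qform_lker a (w : 'rV_p) : w *m (A1 + A2) = 0 ->
  qform ((a%:M + A1) *m (a%:M + A2)) w
    = a ^+ 2 * (w *m w^T) 0 0 + (w *m A1 *m (w *m A1)^T) 0 0.
Proof.
move=> wA0; have wA2 : w *m A2 = - (w *m A1).
  by apply/eqP; rewrite -addr_eq0 addrC -mulmxDr wA0.
have A2w : A2 *m w^T = (w *m A1)^T.
  by rewrite -[w *m A1]opprK -wA2 linearN /= trmx_mul A2_skew mulNmx opprK.
rewrite /qform.
have -> : w *m ((a%:M + A1) *m (a%:M + A2)) = a ^+ 2 *: w + w *m A1 *m A2.
  rewrite mulmxA !mulmxDr !mul_mx_scalar mulmxDl -scalemxAl wA2 scalerDr scalerN.
  by rewrite scalerA -expr2 addrA addrK.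
by rewrite mulmxDl -scalemxAl -mulmxA A2w !mxE.
Qed.

Theorem pss_mxindex (a : R) : 0 < a -> \det (A1 + A2) = 0 ->
  mxindex (1%:M - pss_iter a A1 A2) = 1%N.
Proof.
move=> a_gt0 detA.
have U1 : a%:M + A1 \in unitmx by apply: psd_shift_unitmx => // u; rewrite qform_A1 S_psd.
have U2 : a%:M + A2 \in unitmx.
  by apply: psd_shift_unitmx => // u; rewrite (qform_skew _ A2_skew).
set W := (a%:M + A1) *m (a%:M + A2).
have UW : W \in unitmx by rewrite unitmx_mul U1 U2.
have a2_neq0 : a + a != 0 by rewrite gt_eqF // addr_gt0.
have -> : 1%:M - pss_iter a A1 A2 = invmx W *m ((a + a) *: (A1 + A2)).
  by rewrite -pss_residual // mulKmx.
set N := invmx W *m _.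
have rkN : \rank N = \rank (A1 + A2)%R.
  by rewrite eqmxMfull ?row_full_unit ?unitmx_inv // (eqmx_scale _ a2_neq0).
apply: mxindex_eq1; first by rewrite rkN det0_mxrank_lt.
apply: mxrank_sqr => v vNN.
set w := v *m N *m invmx W.
have vN : v *m N = w *m W by rewrite mulmxKV.
have wA0 : w *m (A1 + A2) = 0.
  move: vNN; rewrite vN /N mulmxA mulmxKV // -scalemxAr => /eqP.
  by rewrite scaler_eq0 (negbTE a2_neq0) => /eqP.
have : qform W w = 0.
  rewrite /qform -vN /N mulmxA -scalemxAr -scalemxAl -mulmxA.
  rewrite -[(A1 + A2) *m w^T]trmxK trmx_mul trmxK (lker_trmx wA0).
  by rewrite trmx0 mulmx0 scaler0 mxE.
rewrite (qform_lker _ wA0) => q0.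
have w0 : w = 0.
  apply: dotmx_self_eq0; have := dotmx_self_ge0 w.
  have := dotmx_self_ge0 (w *m A1); have := exprn_gt0 2 a_gt0.
  by move: q0; set b := a ^+ 2; nra.
by rewrite vN w0 mul0mx.
Qed.

End PSSIndex.

Section Blocks.
Variables (R : realFieldType) (n m l : nat).
Variables (A : 'M[R]_n) (B : 'M[R]_(m, n)) (C : 'M[R]_(l, m)).

Lemma spd_qform_gt0 u : spd A -> u != 0 -> 0 < qform A u.
Proof.
move=> [_ posA] u_neq0; have := posA u^T; rewrite trmxK; apply.
by rewrite -trmx0 (inj_eq trmx_inj).
Qed.

Lemma spd_qform_ge0 u : spd A -> 0 <= qform A u.
Proof.
move=> spdA; have [->|u_neq0] := eqVneq u 0; first by rewrite /qform !mul0mx mxE.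
exact/ltW/spd_qform_gt0.
Qed.

Lemma spd_qform_eq0 u : spd A -> qform A u = 0 -> u = 0.
Proof.
move=> spdA q0; apply/eqP; apply: contraT => /(spd_qform_gt0 spdA).
by rewrite q0 ltxx.
Qed.

Definition bigS : 'M[R]_(n + m + l) := block_mx (block_mx A 0 0 0) 0 0 0.

Lemma bigA_split : bigA A B C = bigA1 l A B + bigA2 n C.
Proof. by rewrite /bigA1 /bigA2 /bigA add_block_mx !addr0 !add0r. Qed.

Lemma bigA1_tr : A^T = A -> (bigA1 l A B)^T = bigS *+ 2 - bigA1 l A B.
Proof.
move=> symA; rewrite /bigA1 /bigS !tr_block_mx !trmx0 symA trmxK linearN /=.
by rewrite mulr2n !opp_block_mx !add_block_mx !oppr0 !addr0 !add0r addrK opprK.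
Qed.

Lemma bigA2_skew : (bigA2 n C)^T = - bigA2 n C.
Proof.
rewrite /bigA2 tr_block_mx tr_col_mx tr_row_mx !trmx0 linearN /= trmxK.
by rewrite opp_block_mx opp_col_mx opp_row_mx !oppr0 opprK.
Qed.

Lemma mulmx_bigS (u : 'rV_(n + m + l)) :
  u *m bigS = row_mx (row_mx (lsubmx (lsubmx u) *m A) 0) 0.
Proof.
rewrite -{1}(hsubmxK u) -{1}(hsubmxK (lsubmx u)) /bigS.
by rewrite !mul_row_block !mulmx0 !addr0.
Qed.

Lemma qform_bigS u : qform bigS u = qform A (lsubmx (lsubmx u)).
Proof.
rewrite /qform mulmx_bigS -{2}(hsubmxK u) -{2}(hsubmxK (lsubmx u)) !tr_row_mx.
by rewrite !mul_row_col !mul0mx !addr0.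
Qed.

End Blocks.

Lemma APSSE (R : realFieldType) n m l (A : 'M[R]_n) (B : 'M[R]_(m, n))
    (C : 'M[R]_(l, m)) (alpha : R) :
  APSS A B C alpha = pss_iter alpha (bigA1 l A B) (bigA2 n C).
Proof. by rewrite /APSS /pss_iter /= !scalemx1. Qed.

Theorem mainTheorem1 (R : realFieldType) (n m l : nat)
  (A : 'M[R]_n) (B : 'M[R]_(m, n)) (C : 'M[R]_(l, m)) :
  spd A ->
  \det (bigA A B C) = 0 ->
  forall alpha : R, 0 < alpha ->
    mxindex (1%:M - APSS A B C alpha) = 1%N.
Proof.
move=> spdA detA alpha alpha_gt0; rewrite bigA_split in detA.
rewrite APSSE; apply: (pss_mxindex (S := bigS m l A)) => //.
- by apply: bigA1_tr; case: spdA.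
- exact: bigA2_skew.
- by move=> u; rewrite qform_bigS spd_qform_ge0.
- move=> u; rewrite qform_bigS mulmx_bigS => /(spd_qform_eq0 spdA) ->.
  by rewrite mul0mx !row_mx0.
Qed.
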